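(* Let $k$ be an algebraically closed field of characteristic $0$ and $d\ge3$. For $m\ge1$ let $V_m$ have basis $v_1,\dots,v_m$ and symmetric $d$-linear form $\Theta_d(v_{i_1},\dots,v_{i_d})=1$ if $i_1+\dots+i_d=(d-1)m+1$ and $0$ otherwise, and $\mathcal{L}(m,d)=\{L\in\mathfrak{gl}(V_m):\sum_{i=1}^d\Theta_d(u_1,\dots,L(u_i),\dots,u_d)=0\ \forall u_j\}$. Fix $n\ge1$, let $\psi\in\mathrm{End}_k(V_n)$, $\psi(v_i)=v_{i-1}$ ($v_0=0$), and let $\mathcal{L}(n,d)^\psi$ be $\mathcal{L}(n,d)$ with Lie bracket $[f,g]_\psi=f\psi g-g\psi f$. Let $\iota:V_n\to V_{n+1}$, $\iota(v_i)=v_i$, and $\pi:V_{n+1}\to V_n$, $\pi(v_i)=v_{i-1}$ ($v_0=0$). Then $\rho(f)=\iota\circ f\circ\pi$ defines an injective Lie algebra homomorphism $\rho:\mathcal{L}(n,d)^\psi\to\mathcal{L}(n+1,d)$, where $\mathcal{L}(n+1,d)$ carries the commutator bracket.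
   Context: $\psi$ lies in the center of $(V_n,\Theta_d)$, so $[\cdot,\cdot]_\psi$ is a Lie bracket on $\mathcal{L}(n,d)$. *)

From HB Require Import structures.
From mathcomp Require Import all_boot all_order all_algebra.
Set Implicit Arguments. Unset Strict Implicit. Unset Printing Implicit Defensive.
Import GRing.Theory.
Local Open Scope ring_scope.

(* V_m = 'cV[k]_m with basis v_1..v_m = delta columns; basis index i (1-based)
   corresponds to ordinal i-1.  Endomorphisms are m x m matrices acting on
   column vectors by left multiplication; composition f o g = f *m g. *)

(* Theta_d on V_m, extended multilinearly: Theta(v_{i_1},...,v_{i_d}) = 1 iff
   i_1+...+i_d = (d-1)m+1 (1-based), i.e. sum of 0-based indices = (d-1)(m-1). *)
Definition Theta (k : fieldType) (m d : nat) (u : 'I_d -> 'cV[k]_m) : k :=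
  \sum_(t : {ffun 'I_d -> 'I_m} | (\sum_(j < d) (t j : nat))%N == ((d - 1) * (m - 1))%N)
     \prod_(j < d) u j (t j) 0.

Definition inLmd (k : fieldType) (m d : nat) (L : 'M[k]_m) : Prop :=
  forall u : 'I_d -> 'cV[k]_m,
    \sum_(i < d) Theta (fun j => if j == i then L *m u j else u j) = 0.

Definition psi (k : fieldType) (n : nat) : 'M[k]_n :=
  \matrix_(r < n, c < n) (((r : nat).+1 == c)%:R).

Definition iota (k : fieldType) (n : nat) : 'M[k]_(n.+1, n) :=
  \matrix_(r < n.+1, c < n) (((r : nat) == c)%:R).

Definition pi (k : fieldType) (n : nat) : 'M[k]_(n, n.+1) :=
  \matrix_(r < n, c < n.+1) (((r : nat).+1 == c)%:R).

Definition bracket_psi (k : fieldType) (n : nat) (f g : 'M[k]_n) : 'M[k]_n :=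
  f *m psi k n *m g - g *m psi k n *m f.

Definition rho (k : fieldType) (n : nat) (f : 'M[k]_n) : 'M[k]_n.+1 :=
  iota k n *m f *m pi k n.

(** Since [pi *m iota = psi], [rho] turns [f psi g] into [rho f *m rho g] by
    associativity, and [rho] is injective because [iota] has a left and [pi] a
    right inverse.  The real content is that [rho] preserves [Theta]-invariance.
    Index the basis from 0, so that the monomials of [Theta] on [V_{n+1}] are the
    tuples [t] with [sum t = (d-1) n].  If slot [i] holds [iota y], only tuples
    with [t_i < n] contribute, and the degree condition then forces [t_j >= 1]
    in every other slot; lowering those [t_j] by one is a bijection onto the
    monomials of [Theta] on [V_n] and turns [w_j] into [pi w_j].  Hence
    [Theta(u_1, ..., rho f u_i, ..., u_d) = Theta(pi u_1, ..., f (pi u_i), ..., pi u_d)]. *)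

From Pilot Require Import Defs.
From HB Require Import structures.
From mathcomp Require Import all_boot all_order all_algebra zify.
Import GRing.Theory.
Set Implicit Arguments. Unset Strict Implicit. Unset Printing Implicit Defensive.
Local Open Scope ring_scope.

Section IotaPi.

Variables (k : fieldType) (n : nat).

Lemma iota_mulmxE m (M : 'M[k]_(n, m)) r c :
  (Defs.iota k n *m M) (widen_ord (leqnSn n) r) c = M r c.
Proof.
rewrite mxE (bigD1 r) //= !mxE eqxx mul1r big1 ?addr0 // => j neq_jr.
by rewrite mxE eq_sym val_eqE (negbTE neq_jr) mul0r.
Qed.

Lemma iota_mulmx_maxE m (M : 'M[k]_(n, m)) c : (Defs.iota k n *m M) ord_max c = 0.
Proof.
by rewrite mxE big1 // => j _; rewrite mxE gtn_eqF ?mul0r.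
Qed.

Lemma pi_mulmxE m (M : 'M[k]_(n.+1, m)) r c :
  (Defs.pi k n *m M) r c = M (lift ord0 r) c.
Proof.
rewrite mxE (bigD1 (lift ord0 r)) //= !mxE eqxx mul1r big1 ?addr0 // => j neq_j.
by rewrite mxE -[r.+1]/(lift ord0 r : nat) val_eqE eq_sym (negbTE neq_j) mul0r.
Qed.

Lemma mulmx_piE m (M : 'M[k]_(m, n)) r c :
  (M *m Defs.pi k n) r (lift ord0 c) = M r c.
Proof.
rewrite mxE (bigD1 c) //= !mxE eqxx mulr1 big1 ?addr0 // => j neq_jc.
by rewrite mxE /= eqSS val_eqE (negbTE neq_jc) mulr0.
Qed.

Lemma pi_iota : Defs.pi k n *m Defs.iota k n = psi k n.
Proof. by apply/matrixP => r c; rewrite pi_mulmxE !mxE. Qed.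

Lemma rhoE (f : 'M[k]_n) r c :
  rho f (widen_ord (leqnSn n) r) (lift ord0 c) = f r c.
Proof. by rewrite /rho -mulmxA iota_mulmxE mulmx_piE. Qed.

Lemma rho_inj : injective (@rho k n).
Proof. by move=> f g eq_fg; apply/matrixP => r c; rewrite -!rhoE eq_fg. Qed.

Lemma rhoZD (a : k) (f g : 'M[k]_n) : rho (a *: f + g) = a *: rho f + rho g.
Proof. by rewrite /rho mulmxDr mulmxDl -!mulmxA -scalemxAl -scalemxAr. Qed.

Lemma rho_bracket_psi (f g : 'M[k]_n) :
  rho (bracket_psi f g) = rho f *m rho g - rho g *m rho f.
Proof. by rewrite /bracket_psi /rho mulmxBr mulmxBl -pi_iota !mulmxA. Qed.

End IotaPi.

Lemma bounded_sum_ltn d n (t : 'I_d -> nat) (i j : 'I_d) :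
  j != i -> (forall l, t l <= n)%N -> (t i < n)%N -> t j = 0%N ->
  (\sum_(l < d) t l < (d - 1) * n)%N.
Proof.
move=> neq_ji le_tn lt_tin tj0.
have : (\sum_(l < d) (t l + (l == i) + n * (l == j)) <= \sum_(l < d) n)%N.
  apply: leq_sum => l _; have := le_tn l.
  case: (eqVneq l i) => [->|_]; first by rewrite eq_sym (negbTE neq_ji); lia.
  by case: (eqVneq l j) => [->|_]; rewrite ?tj0 /=; lia.
have sum_eq l0 : (\sum_(l < d) (l == l0) = 1)%N.
  by rewrite (bigD1 l0) //= eqxx big1 // => l /negbTE ->.
rewrite !big_split /= -big_distrr /= !sum_eq sum_nat_const card_ord.
rewrite mulnBl mul1n; lia.
Qed.

Lemma eq_Theta (k : fieldType) d m (u v : 'I_d -> 'cV[k]_m) :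
  u =1 v -> Theta u = Theta v.
Proof.
by move=> eq_uv; apply: eq_bigr => t _; apply: eq_bigr => j _; rewrite eq_uv.
Qed.

Section ThetaShift.

Variables (k : fieldType) (d n : nat) (i : 'I_d).

Definition shift_up (s : {ffun 'I_d -> 'I_n.+1}) : {ffun 'I_d -> 'I_n.+2} :=
  [ffun j => if j == i then widen_ord (leqnSn _) (s j) else lift ord0 (s j)].

Definition shift_down (t : {ffun 'I_d -> 'I_n.+2}) : {ffun 'I_d -> 'I_n.+1} :=
  [ffun j => inord (if j == i then (t j : nat) else (t j).-1)].

Lemma shift_upE s j : (shift_up s j : nat) = (s j + (j != i))%N.
Proof. by rewrite ffunE; case: (j == i); rewrite /= ?addn0 ?addn1. Qed.

Lemma sum_shift_up s :
  (\sum_(j < d) shift_up s j = \sum_(j < d) s j + (d - 1))%N.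
Proof.
rewrite (eq_bigr _ (fun j _ => shift_upE s j)) big_split /=; congr (_ + _)%N.
by rewrite -big_mkcond /= sum1_card cardC1 card_ord subn1.
Qed.

Lemma shift_upK : cancel shift_up shift_down.
Proof.
move=> s; apply/ffunP => j; apply/val_inj.
by rewrite ffunE shift_upE; case: (j == i); rewrite /= ?addn0 ?addn1 /= inordK ?ltn_ord.
Qed.

Lemma Theta_iota_pi (y : 'I_d -> 'cV[k]_n.+1) (w : 'I_d -> 'cV[k]_n.+2) :
  Theta (fun j => if j == i then Defs.iota k n.+1 *m y j else w j) =
  Theta (fun j => if j == i then y j else Defs.pi k n.+1 *m w j).
Proof.
rewrite /Theta.
pose shifted (t : {ffun 'I_d -> 'I_n.+2}) :=
  (t i < n.+1)%N && [forall j, (j != i) ==> (0 < t j)%N].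
rewrite (bigID shifted) /= [X in _ + X]big1 ?addr0; last first.
  move=> t /andP[/eqP sum_t]; rewrite negb_and.
  case: ltnP => [lt_tin | le_nti] /=.
    case/forallPn=> j; rewrite negb_imply lt0n negbK => /andP[neq_ji /eqP tj0].
    have le_tn l : (t l <= n.+1)%N by rewrite -ltnS.
    by have := bounded_sum_ltn neq_ji le_tn lt_tin tj0; rewrite sum_t ltnn.
  move=> _; rewrite (bigD1 i) //= eqxx.
  have -> : t i = ord_max by apply/val_inj/eqP; rewrite eqn_leq le_nti -ltnS ltn_ord.
  by rewrite iota_mulmx_maxE mul0r.
rewrite (reindex_onto shift_up shift_down); last first.
  move=> t /andP[_ /andP[lt_tin /forallP pos_t]]; apply/ffunP => j; apply/val_inj => /=.
  rewrite shift_upE ffunE; case: (eqVneq j i) => [->|neq_ji] /=.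
    by rewrite addn0 inordK.
  have := pos_t j; rewrite neq_ji /= => tj_gt0.
  by rewrite inordK ?addn1 ?prednK // -ltnS.
apply: eq_big => [s|s _].
  rewrite shift_upK eqxx andbT /shifted shift_upE eqxx addn0 ltn_ord /=.
  have -> : [forall j, (j != i) ==> (0 < shift_up s j)%N].
    by apply/forallP => j; apply/implyP => neq_ji; rewrite shift_upE neq_ji addn1.
  by rewrite andbT sum_shift_up !subn1 /= mulnS addnC eqn_add2l.
apply: eq_bigr => j _; rewrite ffunE.
case: (j == i); first exact: iota_mulmxE.
by rewrite pi_mulmxE.
Qed.

End ThetaShift.

Lemma rho_inLmd (k : fieldType) d n (f : 'M[k]_n.+1) :
  inLmd d f -> inLmd d (rho f).
Proof.
move=> Lf u; rewrite -[RHS](Lf (fun j => Defs.pi k n.+1 *m u j)); apply: eq_bigr => i _.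
rewrite -Theta_iota_pi; apply: eq_Theta => j.
by case: (j == i); rewrite // /rho !mulmxA.
Qed.

Theorem proposition3p8 (k : closedFieldType) (d n : nat) :
  [pchar k] =i pred0 -> (3 <= d)%N -> (1 <= n)%N ->
  [/\ (forall f : 'M[k]_n, inLmd d f -> inLmd d (rho f)),
      (forall (a : k) (f g : 'M[k]_n), inLmd d f -> inLmd d g ->
          rho (a *: f + g) = a *: rho f + rho g),
      (forall f g : 'M[k]_n, inLmd d f -> inLmd d g ->
          rho (bracket_psi f g) = rho f *m rho g - rho g *m rho f)
    & (forall f g : 'M[k]_n, inLmd d f -> inLmd d g -> rho f = rho g -> f = g)].
Proof.
(* Neither the characteristic nor [d >= 3] plays a role; [n >= 1] only allows [n = n'.+1]. *)
move=> _ _; case: n => [//|n] _; split.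
- exact: rho_inLmd.
- by move=> a f g _ _; apply: rhoZD.
- by move=> f g _ _; apply: rho_bracket_psi.
- by move=> f g _ _; apply: rho_inj.
Qed.
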